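(* Let $x$ and $y$ be finite sequences of strings and $\lambda\ge0$. For every valid labeled summary tree $T$ representing $x$ and $y$, $\mathsf{EDG}(x,y,\lambda)\le\mathrm{error}_\lambda(T)$.
   Context: Strings are over a finite alphabet; $\varepsilon$ is the empty string and $\mathsf{ED}$ is Levenshtein edit distance (unit costs). $\mathsf{AED}(x,y)$ for string sequences is the minimum cost of transforming $x$ into $y$ using only inserting a string $w$ into $x$ (cost $\mathsf{ED}(w,\varepsilon)$) and substituting a string $w$ of $x$ by $w'$ (cost $\mathsf{ED}(w,w')$), with no deletions (defined only if $|x|\le|y|$). A labeled summary tree of $\{x,y\}$ is a rooted tree $T$ with a sentinel root, other nodes labeled by strings, with $x$ and $y$ assigned to nodes $v_x,v_y$; $L_T(v)$ is the label sequence on the root-to-$v$ path excluding the sentinel; $|T|$ counts non-sentinel nodes. It is valid if $|x|\le|L_T(v_x)|$ and $|y|\le|L_T(v_y)|$, and $\mathrm{error}_\lambda(T)=\mathsf{AED}(x,L_T(v_x))+\mathsf{AED}(y,L_T(v_y))+\lambda|T|$. $\mathsf{EDG}(i,j,\lambda)$ ($1\le i\le|x|+1$, $1\le j\le|y|+1$): $\mathsf{EDG}(|x|+1,|y|+1,\lambda)=0$, $\mathsf{EDG}(i,|y|+1,\lambda)=\lambda(|x|-i+1)$, $\mathsf{EDG}(|x|+1,j,\lambda)=\lambda(|y|-j+1)$, and otherwise the minimum of $\mathsf{EDG}(i+1,j+1,\lambda)+\lambda+\mathsf{ED}(x_i,y_j)$, $\mathsf{EDG}(i,j+1,\lambda)+\lambda+\mathsf{ED}(\varepsilon,y_j)$,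 $\mathsf{EDG}(i+1,j,\lambda)+\lambda+\mathsf{ED}(x_i,\varepsilon)$, and $\lambda(|x|-i+1)+\lambda(|y|-j+1)$; $\mathsf{EDG}(x,y,\lambda)=\mathsf{EDG}(1,1,\lambda)$. *)

From HB Require Import structures.
From mathcomp Require Import all_boot all_order all_algebra.
From Stdlib Require Import ClassicalEpsilon.
Set Implicit Arguments. Unset Strict Implicit. Unset Printing Implicit Defensive.
Import Order.TTheory GRing.Theory Num.Theory.

Section Strings.
Variable A : finType.

(** Levenshtein edit distance (unit-cost insertions, deletions, substitutions),
    via the standard Wagner--Fischer recursion:
      ED [] t = |t|,  ED s [] = |s|,
      ED (a::s) (b::t) = min (ED s t + [a<>b]) (ED s (b::t) + 1) (ED (a::s) t + 1). *)
Fixpoint ED (s t : seq A) {struct s} : nat :=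
  match s with
  | [::] => size t
  | a :: s' =>
      let fix ED_a (t : seq A) : nat :=
        match t with
        | [::] => size s
        | b :: t' => minn (ED s' t' + (a != b)) (minn (ED s' t).+1 (ED_a t').+1)
        end
      in ED_a t
  end.

Definition aed_step (x x' : seq (seq A)) (c : nat) : Prop :=
  (exists p q w, x = p ++ q /\ x' = p ++ w :: q /\ c = ED w [::]) \/
  (exists p q w w', x = p ++ w :: q /\ x' = p ++ w' :: q /\ c = ED w w').

Inductive aed_trans : seq (seq A) -> seq (seq A) -> nat -> Prop :=
  | aed_refl x : aed_trans x x 0
  | aed_cons x x' y c c' :
      aed_step x x' c -> aed_trans x' y c' -> aed_trans x y (c + c').

Definition is_AED (x y : seq (seq A)) (d : nat) : Prop :=
  aed_trans x y d /\ forall c, aed_trans x y c -> d <= c.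

(** AED(x,y): the minimum cost (chosen classically; it exists whenever
    |x| <= |y|, which is the only case where it is used). *)
Definition AED (x y : seq (seq A)) : nat :=
  epsilon (inhabits 0%N) (fun d => is_AED x y d).

(** A non-sentinel node carries a string label and a
    list of children; the tree itself is the list of children of the sentinel
    root.  Nodes are addressed by paths of child indices from the sentinel
    root ([[::]] addresses the sentinel itself). *)
Inductive stree : Type := Node of seq A & seq stree.

Definition summary_tree := seq stree.

Definition dummy_node : stree := Node [::] [::].

(** [labels_at T v] = Some L_T(v) if [v] addresses a node of [T]
    (labels along the root-to-v path, sentinel excluded), None otherwise. *)
Fixpoint labels_at (T : seq stree) (v : seq nat) : option (seq (seq A)) :=
  match v with
  | [::] => Some [::]
  | i :: v' =>
      if i < size T then
        let: Node l ch := nth dummy_node T i in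
        omap (cons l) (labels_at ch v')
      else None
  end.

Definition is_node (T : summary_tree) (v : seq nat) : bool :=
  labels_at T v != None.

Definition L_T (T : summary_tree) (v : seq nat) : seq (seq A) :=
  odflt [::] (labels_at T v).

Fixpoint stree_size (t : stree) : nat :=
  let: Node _ ch := t in (sumn (map stree_size ch)).+1.

Definition tsize (T : summary_tree) : nat := sumn (map stree_size T).

Definition valid_summary (x y : seq (seq A)) (T : summary_tree) (vx vy : seq nat) : bool :=
  [&& is_node T vx, is_node T vy,
      size x <= size (L_T T vx) & size y <= size (L_T T vy)].

Local Open Scope ring_scope.

Definition error_lam (R : numDomainType) (lam : R) (x y : seq (seq A))
    (T : summary_tree) (vx vy : seq nat) : R :=
  (AED x (L_T T vx))%:R + (AED y (L_T T vy))%:R + lam * (tsize T)%:R.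

(** EDG, defined on suffixes: [EDGs (drop (i-1) x) (drop (j-1) y) lam]
    is EDG(i,j,lam). *)
Fixpoint EDGs (R : numDomainType) (lam : R) (xs ys : seq (seq A)) {struct xs} : R :=
  match xs with
  | [::] => lam * (size ys)%:R
  | a :: xs' =>
      let fix EDG_a (ys : seq (seq A)) : R :=
        match ys with
        | [::] => lam * (size xs)%:R
        | b :: ys' =>
            Num.min (Num.min (Num.min
              (EDGs lam xs' ys' + lam + (ED a b)%:R)
              (EDG_a ys' + lam + (ED [::] b)%:R))
              (EDGs lam xs' ys + lam + (ED a [::])%:R))
              (lam * (size xs)%:R + lam * (size ys)%:R)
        end
      in EDG_a ys
  end.

Definition EDG (R : numDomainType) (x y : seq (seq A)) (lam : R) : R :=
  EDGs lam x y.

End Strings.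

(** The AED from [x] to a label sequence [L] is realised by an order-preserving
    alignment of [x] into [L]: matched pairs cost their edit distance, unmatched
    labels of [L] cost their length.  In a summary tree, [L_T(v_x)] and [L_T(v_y)]
    share the labels [P] down to the lowest common ancestor of [v_x] and [v_y] and
    then continue with disjoint branches [X] and [Y], so |P| + |X| + |Y| <= |T|.
    Walking down [P], the two alignments tell the EDG recursion which move to make
    at each shared label, at price [lam] plus the local alignment costs (the
    triangle inequality for ED through the shared label); past [P] the trivial
    bound EDG <= lam (|x| + |y|) finishes, since |x| <= |X| and |y| <= |Y|. *)

From Pilot Require Import Defs.
From HB Require Import structures.
From mathcomp Require Import all_boot all_order all_algebra.
From mathcomp Require Import zify lra.
From Stdlib Require Import ClassicalEpsilon Classical.
Set Implicit Arguments. Unset Strict Implicit.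
Import Order.TTheory GRing.Theory Num.Theory.

Section EditDistance.
Variable A : finType.
Implicit Types (a b c : A) (s t u : seq A).

Lemma ED_cons a b s t : ED (a :: s) (b :: t) =
  minn (ED s t + (a != b)) (minn (ED s (b :: t)).+1 (ED (a :: s) t).+1).
Proof. by []. Qed.

Lemma ED0s t : ED [::] t = size t. Proof. by []. Qed.

Lemma EDs0 s : ED s [::] = size s. Proof. by case: s. Qed.

Lemma ED_ge_size s t : size s - size t <= ED s t /\ size t - size s <= ED s t.
Proof.
elim: s t => [|a s IH] t; first by rewrite ED0s /=; lia.
elim: t => [|b t IHt]; first by rewrite EDs0 /=; lia.
rewrite ED_cons /=; have := IH t; have := IH (b :: t); move: IHt => /=; lia.
Qed.

Lemma ED_le_size s t : ED s t <= size s + size t.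
Proof.
elim: s t => [|a s IH] t; first by rewrite ED0s.
elim: t => [|b t IHt]; first by rewrite EDs0 /=; lia.
rewrite ED_cons /=; have := IH t; move: IHt => /=; lia.
Qed.

Lemma ED_sym s t : ED s t = ED t s.
Proof.
elim: s t => [|a s IH] t; first by rewrite ED0s EDs0.
elim: t => [|b t IHt]; first by rewrite EDs0 ED0s.
rewrite !ED_cons IH (IH (b :: t)) IHt eq_sym; lia.
Qed.

Lemma ED_refl s : ED s s = 0%N.
Proof. by elim: s => [|a s IH] //; rewrite ED_cons IH eqxx; lia. Qed.

Lemma ED_consl a s u : ED (a :: s) u <= (ED s u).+1.
Proof. by case: u => [|c u]; [rewrite !EDs0 | rewrite ED_cons; lia]. Qed.

Lemma ED_consr c s u : ED s (c :: u) <= (ED s u).+1.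
Proof. by case: s => [|a s]; [rewrite !ED0s | rewrite ED_cons; lia]. Qed.

Lemma neq_triangle a b c : ((a != c) <= (a != b) + (b != c))%N.
Proof. by case: (eqVneq a b) => [->|]; [rewrite add0n | case: (a != c)]. Qed.

Lemma ED_triangle s t u : ED s u <= ED s t + ED t u.
Proof.
move: {2}(size s + size t + size u)%N (leqnn (size s + size t + size u)) => n.
elim: n s t u => [|n IH] [|a s] [|b t] [|c u] // Hn;
  rewrite ?ED0s ?EDs0; try lia.
- by have [_] := ED_ge_size (b :: t) (c :: u); rewrite /=; lia.
- by have := ED_le_size (a :: s) (c :: u); rewrite /=; lia.
- by have [] := ED_ge_size (a :: s) (b :: t); rewrite /=; lia.
have H1 := IH s (b :: t) (c :: u) ltac:(move: Hn => /=; lia).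
have H2 := IH (a :: s) (b :: t) u ltac:(move: Hn => /=; lia).
have H3 := IH (a :: s) t (c :: u) ltac:(move: Hn => /=; lia).
have H4 := IH s t u ltac:(move: Hn => /=; lia).
have H5 := IH s t (c :: u) ltac:(move: Hn => /=; lia).
have := ED_consl a s (c :: u); have := ED_consr c (a :: s) u.
have := ED_consr c t u; have := neq_triangle a b c.
have := ED_cons a b s t; have := ED_cons b c t u; have := ED_cons a c s u; lia.
Qed.

End EditDistance.

Section Alignments.
Variable A : finType.
Implicit Types (a b w : seq A) (x y L p q : seq (seq A)).

Inductive align : seq (seq A) -> seq (seq A) -> nat -> Prop :=
  | align_nil L : align [::] L (sumn (map size L))
  | align_skip x b L c : align x L c -> align x (b :: L) (c + size b)
  | align_match a x b L c : align x L c -> align (a :: x) (b :: L) (c + ED a b).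

Lemma align_size x L c : align x L c -> size x <= size L.
Proof. by elim=> //= *; lia. Qed.

Lemma align_refl x : align x x 0.
Proof.
elim: x => [|a x IH]; first exact: (align_nil [::]).
by have := align_match a a IH; rewrite ED_refl.
Qed.

Lemma align_cons_inv a x b L c : align (a :: x) (b :: L) c ->
  (exists2 c', align (a :: x) L c' & c = (c' + size b)%N) \/
  (exists2 c', align x L c' & c = (c' + ED a b)%N).
Proof.
move Ex: {1}(a :: x) => x0; move EL: {1}(b :: L) => L0 H.
case: H Ex EL => [L1|x1 b1 L1 c1 H|a1 x1 b1 L1 c1 H] //.
- by move=> -> [-> ->]; left; exists c1.
- by move=> [-> ->] [-> ->]; right; exists c1.
Qed.

Lemma align_delete x L d p q w : align x L d -> x = p ++ w :: q ->
  exists2 d', align (p ++ q) L d' & d' <= d + size w.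
Proof.
move=> H; elim: H p => [L0|x0 b L0 c _ IH|a x0 b L0 c H IH] p Ex.
- by case: p Ex.
- have [d' H' Hd] := IH p Ex.
  by exists (d' + size b); [exact: align_skip | lia].
- case: p Ex => [|p0 p'] /= [-> Ex].
  + exists (c + size b); first by rewrite -Ex; exact: align_skip.
    by have [_] := ED_ge_size w b; lia.
  + have [d' H' Hd] := IH p' Ex.
    by exists (d' + ED p0 b); [exact: align_match | lia].
Qed.

Lemma align_change x L d p q w w' : align x L d -> x = p ++ w' :: q ->
  exists2 d', align (p ++ w :: q) L d' & d' <= d + ED w w'.
Proof.
move=> H; elim: H p => [L0|x0 b L0 c _ IH|a x0 b L0 c H IH] p Ex.
- by case: p Ex.
- have [d' H' Hd] := IH p Ex.
  by exists (d' + size b); [exact: align_skip | lia].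
- case: p Ex => [|p0 p'] /= [-> Ex].
  + exists (c + ED w b); first by rewrite -Ex; exact: align_match.
    by have := ED_triangle w w' b; lia.
  + have [d' H' Hd] := IH p' Ex.
    by exists (d' + ED p0 b); [exact: align_match | lia].
Qed.

(* Replaying the operations backwards from the trivial alignment of [y] with
   itself: undoing an insertion or a substitution raises the cost by at most
   the cost of that operation. *)
Lemma aed_trans_align x y c : aed_trans x y c -> exists2 d, align x y d & d <= c.
Proof.
elim=> [x0|x0 x' y0 c0 c' Hs _ [d Hd Hle]]; first by exists 0%N; [exact: align_refl|].
case: Hs => [[p [q [w [-> [Ex ->]]]]] | [p [q [w [w' [-> [Ex ->]]]]]]].
- by have [d' ? ?] := align_delete Hd Ex; exists d'; rewrite // EDs0; lia.
- by have [d' ? ?] := align_change w Hd Ex; exists d'; rewrite //; lia.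
Qed.

Lemma aed_trans_cons w x y c : aed_trans x y c -> aed_trans (w :: x) (w :: y) c.
Proof.
elim=> [x0|x0 x' y0 c0 c' Hs _ IH]; first exact: aed_refl.
apply: aed_cons IH.
case: Hs => [[p [q [w0 [-> [-> ->]]]]] | [p [q [w0 [w' [-> [-> ->]]]]]]].
- by left; exists (w :: p), q, w0.
- by right; exists (w :: p), q, w0, w'.
Qed.

Lemma aed_trans_exists x L : size x <= size L -> exists c, aed_trans x L c.
Proof.
elim: L x => [|b L IH] [|a x] //=; first by exists 0%N; exact: aed_refl.
- move=> _; have [c Hc] := IH [::] isT.
  exists (ED b [::] + c); apply: (aed_cons (x' := [:: b])); last exact: aed_trans_cons.
  by left; exists [::], [::], b.
- move=> Hs; have [c Hc] := IH x Hs.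
  exists (ED a b + c); apply: (aed_cons (x' := b :: x)); last exact: aed_trans_cons.
  by right; exists [::], x, a, b.
Qed.

Lemma is_AED_exists x L c : aed_trans x L c -> exists d, is_AED x L d.
Proof.
elim/ltn_ind: c => c IH Hc.
case: (classic (exists2 c', c' < c & aed_trans x L c')) => [[c' lt_c'c Hc'] | Hmin].
  exact: IH Hc'.
exists c; split=> // c' Hc'; rewrite leqNgt; apply/negP => lt_c'c.
by apply: Hmin; exists c'.
Qed.

Lemma AED_align x L : size x <= size L -> exists2 d, align x L d & d <= AED x L.
Proof.
move=> /aed_trans_exists [c /is_AED_exists AEDx].
by have [/aed_trans_align] := epsilon_spec (inhabits 0%N) _ AEDx.
Qed.

End Alignments.

Section SummaryTrees.
Variable A : finType.
Implicit Types (T : seq (stree A)) (v : seq nat) (L : seq (seq A)).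

Notation nth_node T i := (nth (@dummy_node A) T i).

Lemma stree_size_nth_le T i : i < size T -> stree_size (nth_node T i) <= Defs.tsize T.
Proof.
rewrite /Defs.tsize; elim: T i => [|t T IH] [|i] //= Hi; first lia.
by have := IH i Hi; lia.
Qed.

Lemma stree_size_nth2_le T i j : i != j -> i < size T -> j < size T ->
  stree_size (nth_node T i) + stree_size (nth_node T j) <= Defs.tsize T.
Proof.
rewrite /Defs.tsize; elim: T i j => [|t T IH] [|i] [|j] //= Hij Hi Hj.
- by have := stree_size_nth_le Hj; rewrite /Defs.tsize; lia.
- by have := stree_size_nth_le Hi; rewrite /Defs.tsize; lia.
- by have := IH i j Hij Hi Hj; lia.
Qed.

Lemma size_labels_at_le T v L : labels_at T v = Some L -> size L <= Defs.tsize T.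
Proof.
elim: v T L => [|i v IH] T L /=; first by case=> <-.
case: ifP => // Hi; have := stree_size_nth_le Hi.
case: (nth_node T i) => l ch /=; rewrite /Defs.tsize => Hs.
case E: (labels_at ch v) => [L'|] //= [<-] /=.
by have := IH _ _ E; rewrite /Defs.tsize; lia.
Qed.

(* [P] lists the labels down to the lowest common ancestor of [vx] and [vy];
   the two branches below it are disjoint subtrees. *)
Lemma labels_at_common_prefix T vx vy Lx Ly :
  labels_at T vx = Some Lx -> labels_at T vy = Some Ly ->
  exists P X Y, [/\ Lx = P ++ X, Ly = P ++ Y &
                    size P + size X + size Y <= Defs.tsize T].
Proof.
elim: vx T vy Lx Ly => [|i vx IH] T vy Lx Ly.
  case=> <- /size_labels_at_le HLy.
  by exists [::], [::], Ly.
case: vy => [|j vy] HLx.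
  case=> <-; exists [::], Lx, [::]; rewrite addn0.
  by split=> //; exact: size_labels_at_le HLx.
move: HLx => /=; case: ifP => // Hi; case: ifP => // Hj.
have [<-|neq_ij] := eqVneq i j.
  have := stree_size_nth_le Hi.
  case: (nth_node T i) => l ch /=; rewrite /Defs.tsize => Hs.
  case E1: (labels_at ch vx) => [Lx'|] //= [<-].
  case E2: (labels_at ch vy) => [Ly'|] //= [<-].
  have [P [X [Y [-> -> HS]]]] := IH _ _ _ _ E1 E2.
  by exists (l :: P), X, Y; split=> //=; move: HS; rewrite /Defs.tsize; lia.
have := stree_size_nth2_le neq_ij Hi Hj.
case: (nth_node T i) => l ch; case: (nth_node T j) => l' ch' /=.
rewrite /Defs.tsize => Hs.
case E1: (labels_at ch vx) => [Lx'|] //= [<-].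
case E2: (labels_at ch' vy) => [Ly'|] //= [<-].
exists [::], (l :: Lx'), (l' :: Ly'); split=> //=.
by have := size_labels_at_le E1; have := size_labels_at_le E2; rewrite /Defs.tsize; lia.
Qed.

End SummaryTrees.

Section EDGBound.
Variables (A : finType) (R : realDomainType) (lam : R).
Local Open Scope ring_scope.
Implicit Types (a b p : seq A) (x y P X Y : seq (seq A)).

Lemma EDGs_cons a b x y : EDGs lam (a :: x) (b :: y) =
  Num.min (Num.min (Num.min
    (EDGs lam x y + lam + (ED a b)%:R)
    (EDGs lam (a :: x) y + lam + (ED [::] b)%:R))
    (EDGs lam x (b :: y) + lam + (ED a [::])%:R))
    (lam * (size (a :: x))%:R + lam * (size (b :: y))%:R).
Proof. by []. Qed.

Lemma EDGs_le_size x y : EDGs lam x y <= lam * (size x + size y)%:R.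
Proof.
case: x => [|a x]; first by rewrite /= add0n.
case: y => [|b y]; first by rewrite /= addn0.
by rewrite EDGs_cons ge_min natrD mulrDr lexx orbT.
Qed.

Lemma EDGs_le_subst a b x y :
  EDGs lam (a :: x) (b :: y) <= EDGs lam x y + lam + (ED a b)%:R.
Proof. by rewrite EDGs_cons !ge_min lexx. Qed.

Lemma EDGs_le_insert a b x y :
  EDGs lam (a :: x) (b :: y) <= EDGs lam (a :: x) y + lam + (size b)%:R.
Proof. by rewrite EDGs_cons !ge_min lexx !orbT. Qed.

Lemma EDGs_le_delete a b x y :
  EDGs lam (a :: x) (b :: y) <= EDGs lam x (b :: y) + lam + (size a)%:R.
Proof. by rewrite EDGs_cons !ge_min EDs0 lexx !orbT. Qed.

Lemma EDGs_le_sizes x y n cx cy : 0 <= lam -> (size x + size y <= n)%N ->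
  EDGs lam x y <= cx%:R + cy%:R + lam * n%:R.
Proof.
move=> lam_ge0 le_n; apply: le_trans (EDGs_le_size x y) _.
have : lam * (size x + size y)%:R <= lam * n%:R by rewrite ler_wpM2l // ler_nat.
by have := ler0n R cx; have := ler0n R cy; lra.
Qed.

Lemma EDGs_le_align P X Y x y cx cy : 0 <= lam ->
  align x (P ++ X) cx -> align y (P ++ Y) cy ->
  EDGs lam x y <= cx%:R + cy%:R + lam * (size P + size X + size Y)%:R.
Proof.
move=> lam_ge0; elim: P x y cx cy => [|p P IH] x y cx cy Hx Hy.
  apply: EDGs_le_sizes => //.
  by have := align_size Hx; have := align_size Hy; rewrite /=; lia.
have Sx := align_size Hx; have Sy := align_size Hy; rewrite /= !size_cat in Sx Sy.
case: x Hx Sx => [|a x] Hx Sx; first by apply: EDGs_le_sizes => //; move: Sx Sy => /=; lia.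
case: y Hy Sy => [|b y] Hy Sy; first by apply: EDGs_le_sizes => //; move: Sx Sy => /=; lia.
have -> : (size (p :: P) + size X + size Y)%N = (size P + size X + size Y).+1.
  by rewrite /=; lia.
rewrite mulrS mulrDr mulr1.
have ab_via_p : (ED a b)%:R <= (ED a p)%:R + (ED b p)%:R :> R.
  by rewrite -natrD ler_nat (ED_sym b p) ED_triangle.
have b_via_p : (size b)%:R <= (size p)%:R + (ED b p)%:R :> R.
  by rewrite -natrD ler_nat addnC; have := ED_triangle b p [::]; rewrite !EDs0.
have a_via_p : (size a)%:R <= (ED a p)%:R + (size p)%:R :> R.
  by rewrite -natrD ler_nat; have := ED_triangle a p [::]; rewrite !EDs0.
have size_p_ge0 := ler0n R (size p).
have [[cx' Hx' ->]|[cx' Hx' ->]] := align_cons_inv Hx;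
have [[cy' Hy' ->]|[cy' Hy' ->]] := align_cons_inv Hy;
have IHxy := IH _ _ _ _ Hx' Hy'; rewrite (natrD R cx') (natrD R cy').
- by lra.
- by have := EDGs_le_insert a b x y; lra.
- by have := EDGs_le_delete a b x y; lra.
- by have := EDGs_le_subst a b x y; lra.
Qed.

End EDGBound.

Local Open Scope ring_scope.

Theorem lemma10 (R : realDomainType) (A : finType) (x y : seq (seq A)) (lam : R)
    (T : summary_tree A) (vx vy : seq nat) :
  0 <= lam ->
  valid_summary x y T vx vy ->
  EDG x y lam <= error_lam lam x y T vx vy.
Proof.
move=> lam_ge0 /and4P [].
rewrite /is_node /error_lam /L_T /EDG.
case Ex: (labels_at T vx) => [Lx|] // _; case Ey: (labels_at T vy) => [Ly|] // _ /=.
move=> /AED_align [dx Hdx le_dx] /AED_align [dy Hdy le_dy].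
have [P [X [Y [ELx ELy le_T]]]] := labels_at_common_prefix Ex Ey.
rewrite ELx in Hdx; rewrite ELy in Hdy.
have := EDGs_le_align lam_ge0 Hdx Hdy.
have : lam * (size P + size X + size Y)%:R <= lam * (Defs.tsize T)%:R.
  by rewrite ler_wpM2l // ler_nat.
rewrite -!(ler_nat R) in le_dx le_dy; lra.
Qed.
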